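(* Suppose QEPmin is in the hard case, and let $(\lambda_*,z_* )$ be a minimizer of QEPmin with $b_0^{\top}z_*=0$. Then: (1) $\lambda_*=\lambda_{\min}(H)$, the smallest eigenvalue of $H$; (2) $g_0\perp\mathcal U$, where $\mathcal U$ is the eigenspace of $H$ associated with $\lambda_{\min}(H)$; (3) $b_0\perp\mathcal V$, where $\mathcal V$ is the eigenspace of $PAP$ associated with its eigenvalue $\lambda_{\min}(H)\in\operatorname{eig}(PAP)$.
   Context: Let $A\in\mathbb{R}^{n\times n}$ be symmetric, $C\in\mathbb{R}^{n\times m}$ ($m<n$) full column rank, $b\in\mathbb{R}^m$, $n_0=C(C^{\top}C)^{-1}b$ with $\|n_0\|<1$, $\gamma=\sqrt{1-\|n_0\|^2}$, $P=I-C(C^{\top}C)^{-1}C^{\top}$ (orthogonal projector onto $\mathcal N(C^{\top})$), $b_0=PAn_0$, assumed nonzero. Let $S_1\in\mathbb{R}^{n\times(n-m)}$ have orthonormal columns spanning $\mathcal N(C^{\top})$, $H=S_1^{\top}AS_1$, $g_0=S_1^{\top}b_0$. QEPmin: minimize $\lambda$ over pairs $(\lambda,z)$ with $\lambda\in\mathbb{R}$, $0\neq z\in\mathcal N(C^{\top})$ and $(PAP-\lambda I)^2z=\gamma^{-2}b_0b_0^{\top}z$. QEPmin is in the hard case if it has a minimizer $(\lambda_*,z_* )$ with $b_0^{\top}z_*=0$; otherwise in the easy case. *)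

From HB Require Import structures.
From mathcomp Require Import all_boot all_order all_algebra.
Set Implicit Arguments. Unset Strict Implicit. Unset Printing Implicit Defensive.
Import Order.TTheory GRing.Theory Num.Theory.
Local Open Scope ring_scope.

Section QEP.
Variables (R : rcfType) (n m : nat).
Variables (A : 'M[R]_n) (C : 'M[R]_(n, m)) (b : 'cV[R]_m).

Definition vnorm (k : nat) (v : 'cV[R]_k) : R := Num.sqrt ((v^T *m v) 0 0).

Definition n0 : 'cV[R]_n := C *m invmx (C^T *m C) *m b.
Definition gam : R := Num.sqrt (1 - vnorm n0 ^+ 2).
Definition Pproj : 'M[R]_n := 1%:M - C *m invmx (C^T *m C) *m C^T.
Definition b0 : 'cV[R]_n := Pproj *m A *m n0.
Definition PAP : 'M[R]_n := Pproj *m A *m Pproj.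

Definition QEP_feasible (lam : R) (z : 'cV[R]_n) : Prop :=
  [/\ z != 0, C^T *m z = 0 &
      (PAP - lam%:M) *m (PAP - lam%:M) *m z = gam ^-2 *: (b0 *m b0^T *m z)].

Definition QEP_minimizer (lam : R) (z : 'cV[R]_n) : Prop :=
  QEP_feasible lam z /\
  forall lam' z', QEP_feasible lam' z' -> lam <= lam'.

End QEP.

Definition is_lambda_min (R : rcfType) (k : nat) (M : 'M[R]_k) (l : R) : Prop :=
  eigenvalue M l /\ forall mu, eigenvalue M mu -> l <= mu.

From HB Require Import structures.
From mathcomp Require Import all_boot all_order all_algebra.
From mathcomp Require Import ring lra.
Set Implicit Arguments. Unset Strict Implicit. Unset Printing Implicit Defensive.
Import Order.TTheory GRing.Theory Num.Theory.
Local Open Scope ring_scope.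

(* In the coordinates z = S1 y of N(C^T), PAP acts as H and b0 = S1 g0, so the QEP
   becomes ((H - l)^2 - c g0 g0^T) y = 0 with c = gam^-2 > 0.  In the hard case the
   minimizer has g0^T y = 0, hence (H - lam)^2 y = 0 and, H being symmetric,
   H y = lam y.
   Conversely, if H w = nu w with g0^T w <> 0, the QEP has an eigenvalue below nu: for l
   not an eigenvalue of H,
     det ((H - l)^2 - c g0 g0^T) = det (H - l)^2 (1 - c |(H - l)^-1 g0|^2),
   which Cauchy-Schwarz makes <= 0 for l just below nu and >= 0 for l very negative, so
   this polynomial in l has a root in between.  Minimality of lam therefore excludes
   eigenvalues of H below lam and eigenvectors for lam that are not orthogonal to g0. *)

Section EuclideanDot.
Variable R : realFieldType.
Implicit Types (k : nat).

Definition vdot k (u v : 'cV[R]_k) : R := (u^T *m v) 0 0.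

Lemma vdotE k (u v : 'cV[R]_k) : vdot u v = \sum_i u i 0 * v i 0.
Proof. by rewrite /vdot mxE; apply: eq_bigr => i _; rewrite mxE. Qed.

Lemma trmx_mul_vdot k (u v : 'cV[R]_k) : u^T *m v = (vdot u v)%:M.
Proof. exact: mx11_scalar. Qed.

Lemma vdotC k (u v : 'cV[R]_k) : vdot u v = vdot v u.
Proof. by rewrite !vdotE; apply: eq_bigr => i _; rewrite mulrC. Qed.

Lemma vdot0r k (u : 'cV[R]_k) : vdot u 0 = 0.
Proof. by rewrite /vdot mulmx0 mxE. Qed.

Lemma vdotBr k (u v w : 'cV[R]_k) : vdot u (v - w) = vdot u v - vdot u w.
Proof. by rewrite /vdot mulmxBr !mxE. Qed.

Lemma vdotZr k (u v : 'cV[R]_k) a : vdot u (a *: v) = a * vdot u v.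
Proof. by rewrite /vdot -scalemxAr mxE. Qed.

Lemma vdotZl k (u v : 'cV[R]_k) a : vdot (a *: u) v = a * vdot u v.
Proof. by rewrite vdotC vdotZr vdotC. Qed.

Lemma vdot_mulmx_tr k (M : 'M[R]_k) (u v : 'cV[R]_k) :
  vdot u (M *m v) = vdot (M^T *m u) v.
Proof. by rewrite /vdot trmx_mul trmxK mulmxA. Qed.

Lemma vdotvv_ge0 k (u : 'cV[R]_k) : 0 <= vdot u u.
Proof. by rewrite vdotE sumr_ge0 // => i _; rewrite -expr2 sqr_ge0. Qed.

Lemma vdotvv_eq0 k (u : 'cV[R]_k) : (vdot u u == 0) = (u == 0).
Proof.
apply/idP/eqP=> [|->]; last by rewrite vdot0r.
rewrite vdotE psumr_eq0 => [/allP u0|i _]; last by rewrite -expr2 sqr_ge0.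
apply/matrixP => i j; rewrite (ord1 j) mxE.
by apply/eqP; rewrite -sqrf_eq0 expr2; apply: u0; rewrite mem_index_enum.
Qed.

Lemma vdotvv_gt0 k (u : 'cV[R]_k) : (0 < vdot u u) = (u != 0).
Proof. by rewrite lt_def vdotvv_eq0 vdotvv_ge0 andbT. Qed.

Lemma coord_sqr_le_vdot k (u : 'cV[R]_k) i : u i 0 ^+ 2 <= vdot u u.
Proof.
rewrite vdotE (bigD1 i) //= -expr2 lerDl.
by rewrite sumr_ge0 // => j _; rewrite -expr2 sqr_ge0.
Qed.

Lemma cauchy_schwarz k (u v : 'cV[R]_k) : vdot u v ^+ 2 <= vdot u u * vdot v v.
Proof.
have [->|u0] := eqVneq u 0; first by rewrite vdotC !vdot0r expr0n mul0r.
have uu_gt0 : 0 < vdot u u by rewrite vdotvv_gt0.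
pose t := vdot u v / vdot u u.
have := vdotvv_ge0 (v - t *: u).
rewrite vdotBr vdotZr ![vdot (v - _) _]vdotC !vdotBr !vdotZr [vdot v u]vdotC /t.
set a := vdot u v; set p := vdot u u; set q := vdot v v.
have -> : q - a / p * a - a / p * (a - a / p * p) = (p * q - a ^+ 2) / p.
  by field; rewrite gt_eqF.
by rewrite pmulr_lge0 ?invr_gt0 // subr_ge0.
Qed.

End EuclideanDot.

Lemma det1D_mulmxC (R : comPzRingType) p q (A : 'M[R]_(p, q)) (B : 'M[R]_(q, p)) :
  \det (1%:M + A *m B) = \det (1%:M + B *m A).
Proof.
pose L := block_mx (1%:M : 'M[R]_p) 0 B 1%:M.
pose U := block_mx (1%:M + A *m B) A 0 (1%:M : 'M[R]_q).
pose L' := block_mx (1%:M : 'M[R]_p) 0 (- B) 1%:M.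
have LUL' : L *m U *m L' = block_mx 1%:M A 0 (1%:M + B *m A).
  rewrite !mulmx_block !mul1mx !mul0mx !mulmx0 !mulmx1 !addr0 !add0r.
  rewrite !mulmxN !mulmxDr !mulmxDl !mulmx1 !mulmxA.
  by congr block_mx; [exact: addrK | rewrite mul1mx [B + _]addrC subrr | exact: addrC].
have := congr1 determinant LUL'.
by rewrite !det_mulmx !(det_lblock, det_ublock) !det1 !mul1r !mulr1.
Qed.

Lemma det0_colP (R : fieldType) k (M : 'M[R]_k) :
  \det M = 0 -> exists2 v : 'cV[R]_k, v != 0 & M *m v = 0.
Proof.
rewrite -det_tr => /eqP/det0P[v v0 vM].
by exists v^T; rewrite ?trmx_eq0 // -[M]trmxK -trmx_mul vM trmx0.
Qed.

Lemma sym_eigenvalueP (R : fieldType) k (M : 'M[R]_k) a : M^T = M ->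
  reflect (exists2 v : 'cV[R]_k, v != 0 & M *m v = a *: v) (eigenvalue M a).
Proof.
move=> symM; apply: (iffP eigenvalueP) => -[v].
  by move=> vM v0; exists v^T; rewrite ?trmx_eq0 // -symM -trmx_mul vM linearZ.
by move=> v0 Mv; exists v^T; rewrite ?trmx_eq0 // -symM -trmx_mul Mv linearZ.
Qed.

Lemma shift_unitmx (R : fieldType) k (M : 'M[R]_k) l :
  ~~ eigenvalue M l -> M - l%:M \in unitmx.
Proof.
rewrite unitmxE unitfE; apply: contraNN => /det0P[v v0 vM].
apply/eigenvalueP; exists v => //.
by apply/eqP; rewrite -subr_eq0 -mul_mx_scalar -mulmxBr vM.
Qed.

Section RealMatrix.
Variable R : realFieldType.

Lemma sym_mulmx_sqr_eq0 k (M : 'M[R]_k) (v : 'cV[R]_k) :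
  M^T = M -> M *m M *m v = 0 -> M *m v = 0.
Proof.
move=> symM MMv; apply/eqP; rewrite -vdotvv_eq0 vdot_mulmx_tr symM mulmxA MMv.
by rewrite vdotC vdot0r.
Qed.

Definition mx_abs_sum k (M : 'M[R]_k) : R := \sum_i \sum_j `|M i j|.

Lemma vdot_mulmx_ge_abs_sum k (M : 'M[R]_k) (x : 'cV[R]_k) :
  - (mx_abs_sum M * vdot x x) <= vdot x (M *m x).
Proof.
have xx_ge := coord_sqr_le_vdot x; set X := vdot x x in xx_ge *.
rewrite vdotE /mx_abs_sum mulr_suml -sumrN; apply: ler_sum => i _.
rewrite mxE mulr_sumr mulr_suml -sumrN; apply: ler_sum => j _.
have xij : `|x i 0 * x j 0| <= X.
  have := xx_ge i; have := xx_ge j.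
  rewrite -[x i 0 ^+ 2]real_normK ?num_real // -[x j 0 ^+ 2]real_normK ?num_real //.
  rewrite normrM; have := normr_ge0 (x i 0); have := normr_ge0 (x j 0).
  set p := `|x i 0|; set q := `|x j 0|; have := sqr_ge0 (p - q); nra.
apply: lerNnormlW; rewrite mulrCA normrM ler_wpM2l //.
Qed.

Lemma det_sqr_sub_rank1 k (M : 'M[R]_k) (g : 'cV[R]_k) (c : R)
    (x := invmx M *m g) : M \in unitmx -> M^T = M ->
  \det (M *m M - c *: (g *m g^T)) = \det M ^+ 2 * (1 - c * vdot x x).
Proof.
move=> unitM symM; have Mx : M *m x = g by rewrite mulKVmx.
clearbody x; have xM : x^T *m M = g^T by rewrite -Mx trmx_mul symM.
have -> : M *m M - c *: (g *m g^T) = M *m (1%:M + (- c *: x) *m x^T) *m M.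
  rewrite mulmxDr mulmx1 mulmxDl -scalemxAl -(scalemxAr (- c)) -scalemxAl.
  by rewrite mulmxA Mx -mulmxA xM scaleNr.
rewrite !det_mulmx det1D_mulmxC -(scalemxAr (- c)) trmx_mul_vdot det_mx11 !mxE eqxx.
by rewrite !mulr1n; ring.
Qed.

Lemma gram_unitmx p q (C : 'M[R]_(p, q)) :
  \rank C = q -> C^T *m C \in unitmx.
Proof.
move=> rankC; rewrite unitmxE unitfE; apply/negP => /det0P[v v0 vCC].
have CvT : C *m v^T = 0.
  apply/eqP; rewrite -vdotvv_eq0 /vdot trmx_mul trmxK mulmxA -(mulmxA v) vCC.
  by rewrite mul0mx mxE.
have vC : v *m C^T = 0 by rewrite -[v]trmxK -trmx_mul CvT trmx0.
by move/eqP: vC; rewrite mulmx_free_eq0 ?(negbTE v0) // /row_free mxrank_tr rankC.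
Qed.

Lemma poly_nonroot_between (p : {poly R}) a b :
  p != 0 -> a < b -> exists2 x, a < x < b & ~~ root p x.
Proof.
move=> p0 ab; pose s i := b - (b - a) / i.+2%:R.
have ba_gt0 : 0 < b - a by rewrite subr_gt0.
have s_between i : a < s i < b.
  rewrite /s ltrBrDl ltrBlDr ltrDl divr_gt0 ?ltr0Sn //= andbT -ltrBrDr.
  by rewrite ltr_pdivrMr ?ltr0Sn // ltr_pMr // ltr1n.
have s_inj : injective s.
  move=> i j /subrI/(mulfI (lt0r_neq0 ba_gt0))/invr_inj/eqP.
  by rewrite eqr_nat !eqSS => /eqP.
have /allPn[_ /mapP[i _ ->] nroot] : ~~ all (root p) (map s (iota 0 (size p))).
  apply/negP => all_root; have := max_poly_roots p0 all_root.
  by rewrite map_inj_uniq ?iota_uniq // size_map size_iota ltnn => /(_ isT).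
by exists (s i).
Qed.

End RealMatrix.

Section QepMatrix.
Variables (R : rcfType) (k : nat) (H : 'M[R]_k) (g : 'cV[R]_k) (c : R).
Hypotheses (symH : H^T = H) (c_gt0 : 0 < c).

Definition qep_mx l := (H - l%:M) *m (H - l%:M) - c *: (g *m g^T).

Lemma shift_sym l : (H - l%:M)^T = H - l%:M.
Proof. by rewrite linearB /= tr_scalar_mx symH. Qed.

Lemma det_qep_mx_le0 (w : 'cV[R]_k) nu l :
  H *m w = nu *: w -> vdot w g != 0 -> l < nu -> ~~ eigenvalue H l ->
  (nu - l) ^+ 2 * vdot w w <= c * vdot w g ^+ 2 -> \det (qep_mx l) <= 0.
Proof.
move=> Hw wg0 l_lt not_eig gap_le; have symM := shift_sym l.
have unitM := shift_unitmx not_eig; rewrite /qep_mx det_sqr_sub_rank1 //.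
set M := H - l%:M in symM unitM *; set x := invmx M *m g.
have s_gt0 : 0 < nu - l by rewrite subr_gt0.
have Mw : M *m w = (nu - l) *: w by rewrite mulmxBl Hw mul_scalar_mx scalerBl.
have iMw : invmx M *m w = (nu - l)^-1 *: w.
  by rewrite -{1}[w](scalerK (lt0r_neq0 s_gt0)) -scalemxAr -Mw mulKmx.
have wx : vdot w x = (nu - l)^-1 * vdot w g.
  by rewrite /x vdot_mulmx_tr trmx_inv symM iMw vdotZl.
rewrite mulr_ge0_le0 ?sqr_ge0 // subr_le0.
have := cauchy_schwarz w x; rewrite wx.
set s := nu - l in s_gt0 gap_le *; set a := vdot w g in wg0 gap_le *.
set W := vdot w w in gap_le *; set X := vdot x x => cs.
have a2_gt0 : 0 < a ^+ 2 by rewrite exprn_even_gt0.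
have : a ^+ 2 <= a ^+ 2 * (c * X).
  have -> : a ^+ 2 * (c * X) = c * a ^+ 2 * X by ring.
  rewrite {1}(_ : a ^+ 2 = s ^+ 2 * (s^-1 * a) ^+ 2); last by field; rewrite gt_eqF.
  apply: le_trans (ler_wpM2l (sqr_ge0 s) cs) _.
  by rewrite mulrA ler_wpM2r ?vdotvv_ge0.
by rewrite -{1}[a ^+ 2]mulr1 ler_pM2l.
Qed.

(* Below -mx_abs_sum H the matrix H - l is coercive with constant t >= 1 and
   t >= c |g|^2, so c |(H - l)^-1 g|^2 <= c |g|^2 / t^2 <= 1. *)
Lemma det_qep_mx_ge0 l :
  l <= - mx_abs_sum H - 1 - c * vdot g g -> 0 <= \det (qep_mx l).
Proof.
move=> l_le; set t := - l - mx_abs_sum H.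
have cg_ge0 : 0 <= c * vdot g g by rewrite mulr_ge0 ?vdotvv_ge0 ?ltW.
have t_ge1 : 1 <= t by rewrite /t; lra.
have cg_le : c * vdot g g <= t by rewrite /t; lra.
have coercive y : t * vdot y y <= vdot y ((H - l%:M) *m y).
  rewrite mulmxBl mul_scalar_mx vdotBr vdotZr.
  by have := vdot_mulmx_ge_abs_sum H y; rewrite /t; lra.
have not_eig : ~~ eigenvalue H l.
  apply/negP => /(sym_eigenvalueP _ symH)[v v0 Hv].
  have := coercive v; rewrite mulmxBl Hv mul_scalar_mx subrr vdot0r.
  have := vdotvv_gt0 v; rewrite v0 => vv_gt0; nra.
have symM := shift_sym l; have unitM := shift_unitmx not_eig.
rewrite /qep_mx det_sqr_sub_rank1 // mulr_ge0 ?sqr_ge0 // subr_ge0.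
set M := H - l%:M in symM unitM coercive *; set x := invmx M *m g.
have xMx : vdot x (M *m x) = vdot x g by rewrite /x mulKVmx.
have := coercive x; rewrite xMx; have := cauchy_schwarz x g.
have := vdotvv_ge0 x; have := vdotvv_ge0 g.
set X := vdot x x; set G := vdot g g; set d := vdot x g => G_ge0 X_ge0 cs tX.
have [->|X_gt0] := eqVneq X 0; first by rewrite mulr0 ler01.
have {}X_gt0 : 0 < X by rewrite lt_def X_gt0.
have tX_ge0 : 0 <= t * X by rewrite mulr_ge0 // (le_trans ler01).
have t2X_le : t ^+ 2 * X <= G.
  rewrite -(ler_pM2l X_gt0); apply: le_trans cs.
  rewrite (_ : X * (t ^+ 2 * X) = (t * X) ^+ 2); last by ring.
  by rewrite ler_sqr ?nnegrE // (le_trans tX_ge0).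
have ctX_le : c * X * t <= 1.
  have ct2X_le := le_trans (ler_wpM2l (ltW c_gt0) t2X_le) cg_le.
  rewrite -(ler_pM2r (lt_le_trans ltr01 t_ge1)) mul1r.
  by rewrite (_ : c * X * t * t = c * (t ^+ 2 * X)) //; ring.
by apply: le_trans ctX_le; rewrite ler_peMr // mulr_ge0 ?ltW.
Qed.

Definition qep_poly : {poly R} :=
  let HX := map_mx polyC H - 'X%:M in
  \det (HX *m HX - map_mx polyC (c *: (g *m g^T))).

Lemma horner_qep_poly l : qep_poly.[l] = \det (qep_mx l).
Proof.
rewrite -horner_evalE /qep_poly -det_map_mx; congr (\det _).
have evalC p q (B : 'M[R]_(p, q)) : map_mx (horner_eval l) (map_mx polyC B) = B.
  by apply/matrixP => i j; rewrite !mxE horner_evalE hornerC.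
by rewrite map_mxB map_mxM map_mxB map_scalar_mx /= horner_evalE hornerX !evalC.
Qed.

Lemma qep_mx_singular_below (w : 'cV[R]_k) nu :
  H *m w = nu *: w -> vdot w g != 0 ->
  exists2 l, l < nu & exists2 y : 'cV[R]_k, y != 0 & qep_mx l *m y = 0.
Proof.
move=> Hw wg0; set a := vdot w g in wg0.
have w0 : w != 0 by apply: contraNneq wg0 => w0; rewrite /a w0 vdotC vdot0r.
have W_gt0 : 0 < vdot w w by rewrite vdotvv_gt0.
have a2_gt0 : 0 < a ^+ 2 by rewrite exprn_even_gt0.
set e := Num.min 1 (c * a ^+ 2 / vdot w w).
have e_gt0 : 0 < e by rewrite lt_min ltr01 /= divr_gt0 // mulr_gt0.
have e_le1 : e <= 1 by rewrite ge_min lexx.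
have eW_le : e * vdot w w <= c * a ^+ 2 by rewrite -ler_pdivlMr // ge_min lexx orbT.
have e_nu : nu - e < nu by rewrite ltrBlDr ltrDl.
have [l1 /andP[l1_gt l1_lt] not_eig] :=
  poly_nonroot_between (monic_neq0 (char_poly_monic H)) e_nu.
rewrite -eigenvalue_root_char in not_eig.
have gap_le : (nu - l1) ^+ 2 * vdot w w <= c * a ^+ 2.
  apply: le_trans eW_le; rewrite ler_wpM2r ?vdotvv_ge0 //; nra.
have det_le0 := det_qep_mx_le0 Hw wg0 l1_lt not_eig gap_le.
set l0 := Num.min l1 (- mx_abs_sum H - 1 - c * vdot g g).
have det_ge0 : 0 <= \det (qep_mx l0) by apply: det_qep_mx_ge0; rewrite ge_min lexx orbT.
have l0_le : l0 <= l1 by rewrite ge_min lexx.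
have [l /andP[_ l_le]] : exists2 l, l0 <= l <= l1 & root (- qep_poly) l.
  by apply: poly_ivt; rewrite // !hornerN !horner_qep_poly oppr_le0 oppr_ge0 det_ge0.
rewrite rootN /root horner_qep_poly => /eqP/det0_colP[y y0 Ny].
by exists l; [apply: le_lt_trans l1_lt | exists y].
Qed.

Lemma qep_lower_bound_spectrum lam :
  eigenvalue H lam ->
  (forall l (y : 'cV[R]_k), y != 0 -> qep_mx l *m y = 0 -> lam <= l) ->
  is_lambda_min H lam /\ forall u : 'cV[R]_k, H *m u = lam *: u -> g^T *m u = 0.
Proof.
move=> eig_lam lam_le.
have lam_lt (u : 'cV[R]_k) nu : H *m u = nu *: u -> vdot u g != 0 -> lam < nu.
  move=> Hu /(qep_mx_singular_below Hu)[l l_lt [y y0 /(lam_le l y y0)]].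
  by move/le_lt_trans; apply.
split=> [|u Hu]; last first.
  have [ug0|/(lam_lt u lam Hu)] := eqVneq (vdot u g) 0; last by rewrite ltxx.
  by rewrite trmx_mul_vdot vdotC ug0 raddf0.
split=> // mu /(sym_eigenvalueP _ symH)[v v0 Hv].
have [vg0|] := eqVneq (vdot v g) 0; last by move/(lam_lt v mu Hv)/ltW.
apply: (lam_le mu v v0).
have Mv : (H - mu%:M) *m v = 0 by rewrite mulmxBl Hv mul_scalar_mx subrr.
rewrite /qep_mx mulmxBl -mulmxA Mv mulmx0 -scalemxAl -mulmxA.
by rewrite trmx_mul_vdot vdotC vg0 raddf0 mulmx0 scaler0 subrr.
Qed.

End QepMatrix.

Section QepReduction.
Variables (R : rcfType) (n m : nat).
Variables (A : 'M[R]_n) (C : 'M[R]_(n, m)) (b : 'cV[R]_m) (S1 : 'M[R]_(n, n - m)).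
Hypotheses (symA : A^T = A) (rankC : \rank C = m).
Hypotheses (S1_orth : S1^T *m S1 = 1%:M) (S1_ker : (S1^T == kermx C)%MS).

Local Notation P := (Pproj C).
Local Notation H := (S1^T *m A *m S1).
Local Notation g0 := (S1^T *m b0 A C b).

Lemma Pproj_sym : P^T = P.
Proof.
rewrite /Pproj linearB /= tr_scalar_mx !trmx_mul trmxK trmx_inv trmx_mul trmxK.
by rewrite mulmxA.
Qed.

Lemma trC_Pproj : C^T *m P = 0.
Proof.
by rewrite /Pproj mulmxBr mulmx1 !mulmxA mulmxV ?gram_unitmx // mul1mx subrr.
Qed.

Lemma trC_S1 : C^T *m S1 = 0.
Proof.
have /sub_kermxP S1C : (S1^T <= kermx C)%MS by case/andP: S1_ker.
by rewrite -[S1]trmxK -trmx_mul S1C trmx0.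
Qed.

Lemma Pproj_S1 : P *m S1 = S1.
Proof. by rewrite /Pproj mulmxBl mul1mx -(mulmxA _ C^T) trC_S1 mulmx0 subr0. Qed.

Lemma mulmx_S1_eq0 (y : 'cV[R]_(n - m)) : (S1 *m y == 0) = (y == 0).
Proof.
apply/eqP/eqP => [S1y|->]; last exact: mulmx0.
by rewrite -[y]mul1mx -S1_orth -mulmxA S1y mulmx0.
Qed.

Lemma kermx_S1 p (Z : 'M[R]_(n, p)) :
  C^T *m Z = 0 -> exists Y : 'M[R]_(n - m, p), Z = S1 *m Y.
Proof.
move=> CZ; have : (Z^T <= kermx C)%MS.
  by apply/sub_kermxP; rewrite -[C]trmxK -trmx_mul CZ trmx0.
case/andP: S1_ker => _ /(submx_trans _)/[apply]/submxP[D ZD].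
by exists D^T; rewrite -[Z]trmxK ZD trmx_mul trmxK.
Qed.

Lemma Pproj_gram : P = S1 *m S1^T.
Proof.
have [D PD] := kermx_S1 trC_Pproj.
have <- : S1 *m S1^T *m P = P.
  by rewrite PD mulmxA -(mulmxA S1) S1_orth mulmx1.
by apply: trmx_inj; rewrite !trmx_mul !trmxK Pproj_sym mulmxA Pproj_S1.
Qed.

Lemma PAP_S1 : PAP A C *m S1 = S1 *m H.
Proof. by rewrite /PAP -mulmxA Pproj_S1 Pproj_gram !mulmxA. Qed.

Lemma trS1_PAP : S1^T *m PAP A C = H *m S1^T.
Proof. by rewrite /PAP Pproj_gram !mulmxA S1_orth mul1mx. Qed.

Lemma b0_S1 : b0 A C b = S1 *m g0.
Proof. by rewrite /b0 Pproj_gram !mulmxA -(mulmxA S1 S1^T S1) S1_orth mulmx1. Qed.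

Lemma H_sym : H^T = H.
Proof. by rewrite !trmx_mul trmxK symA mulmxA. Qed.

Lemma PAP_sym : (PAP A C)^T = PAP A C.
Proof. by rewrite /PAP !trmx_mul Pproj_sym symA mulmxA. Qed.

Lemma qep_PAP_S1 c l (y : 'cV[R]_(n - m)) :
  (PAP A C - l%:M) *m (PAP A C - l%:M) *m (S1 *m y)
    - c *: (b0 A C b *m (b0 A C b)^T *m (S1 *m y))
  = S1 *m (qep_mx H g0 c l *m y).
Proof.
have shift : (PAP A C - l%:M) *m S1 = S1 *m (H - l%:M).
  by rewrite mulmxBl mulmxBr PAP_S1 mul_scalar_mx mul_mx_scalar.
have -> : (PAP A C - l%:M) *m (PAP A C - l%:M) *m (S1 *m y)
          = S1 *m ((H - l%:M) *m (H - l%:M) *m y).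
  by rewrite mulmxA -(mulmxA _ _ S1) shift mulmxA shift -!mulmxA.
have -> : c *: (b0 A C b *m (b0 A C b)^T *m (S1 *m y))
          = S1 *m (c *: (g0 *m g0^T) *m y).
  have b0E := b0_S1; set g := S1^T *m b0 A C b in b0E *.
  rewrite b0E trmx_mul -!scalemxAl -scalemxAr !mulmxA -(mulmxA _ S1^T S1).
  by rewrite S1_orth mulmx1.
by rewrite -mulmxBr -mulmxBl.
Qed.

Lemma QEP_feasible_S1 l (y : 'cV[R]_(n - m)) :
  QEP_feasible A C b l (S1 *m y) <->
  y != 0 /\ qep_mx H g0 (gam C b ^-2) l *m y = 0.
Proof.
rewrite /QEP_feasible mulmx_S1_eq0 mulmxA trC_S1 mul0mx.
split=> [[y0 _ /eqP] | [y0 qy]]; last first.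
  by split=> //; apply/eqP; rewrite -subr_eq0 qep_PAP_S1 qy mulmx0.
by rewrite -subr_eq0 qep_PAP_S1 mulmx_S1_eq0 => /eqP.
Qed.

Lemma QEP_minimizer_le lam z : QEP_minimizer A C b lam z ->
  forall l (y : 'cV[R]_(n - m)),
  y != 0 -> qep_mx H g0 (gam C b ^-2) l *m y = 0 -> lam <= l.
Proof.
by move=> [_ z_min] l y y0 qy; apply: (z_min l (S1 *m y)); apply/QEP_feasible_S1.
Qed.

Lemma hard_case_eigenvalue lam z :
  QEP_minimizer A C b lam z -> (b0 A C b)^T *m z = 0 -> eigenvalue H lam.
Proof.
move=> [z_feas _] b0z; have [y z_eq] := kermx_S1 (let: And3 _ Cz _ := z_feas in Cz).
rewrite {z}z_eq in z_feas b0z; have [y0] := (QEP_feasible_S1 lam y).1 z_feas.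
have b0E := b0_S1; set g := S1^T *m b0 A C b in b0E *.
have gy : g^T *m y = 0.
  by rewrite -b0z b0E [in RHS]trmx_mul -mulmxA (mulmxA S1^T) S1_orth mul1mx.
rewrite /qep_mx mulmxBl -scalemxAl -(mulmxA g) gy mulmx0 scaler0 subr0.
move/(sym_mulmx_sqr_eq0 (shift_sym H_sym lam)) => Hy.
apply/(sym_eigenvalueP _ H_sym); exists y => //.
by apply/eqP; rewrite -subr_eq0 -mul_scalar_mx -mulmxBl Hy.
Qed.

Lemma eigenvalue_PAP lam : eigenvalue H lam -> eigenvalue (PAP A C) lam.
Proof.
move/(sym_eigenvalueP _ H_sym) => [y y0 Hy]; apply/(sym_eigenvalueP _ PAP_sym).
by exists (S1 *m y); rewrite ?mulmx_S1_eq0 // mulmxA PAP_S1 -(mulmxA S1) Hy -scalemxAr.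
Qed.

Lemma b0_ortho_PAP_eigenspace lam :
  (forall u : 'cV[R]_(n - m), H *m u = lam *: u -> g0^T *m u = 0) ->
  forall v : 'cV[R]_n, PAP A C *m v = lam *: v -> (b0 A C b)^T *m v = 0.
Proof.
move=> g0_ortho v PAPv; have b0E := b0_S1.
set g := S1^T *m b0 A C b in b0E g0_ortho; rewrite b0E trmx_mul -mulmxA g0_ortho //.
by rewrite mulmxA -trS1_PAP -mulmxA PAPv -scalemxAr.
Qed.

End QepReduction.

Lemma gam_inv_gt0 (R : rcfType) n m (C : 'M[R]_(n, m)) b :
  vnorm (n0 C b) < 1 -> 0 < gam C b ^-2.
Proof.
move=> n0_lt; rewrite invr_gt0 exprn_gt0 // sqrtr_gt0 subr_gt0 expr_lt1 //.
exact: sqrtr_ge0.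
Qed.

Theorem theorem2p11 (R : rcfType) (n m : nat)
  (A : 'M[R]_n) (C : 'M[R]_(n, m)) (b : 'cV[R]_m) (S1 : 'M[R]_(n, n - m))
  (lam_s : R) (z_s : 'cV[R]_n) :
  (m < n)%N ->
  A^T = A ->
  \rank C = m ->
  vnorm (n0 C b) < 1 ->
  b0 A C b != 0 ->
  S1^T *m S1 = 1%:M ->
  (S1^T == kermx C)%MS ->
  QEP_minimizer A C b lam_s z_s ->
  (b0 A C b)^T *m z_s = 0 ->
  let H := S1^T *m A *m S1 in
  let g0 := S1^T *m b0 A C b in
  [/\ is_lambda_min H lam_s,
      forall u : 'cV[R]_(n - m), H *m u = lam_s *: u -> g0^T *m u = 0,
      eigenvalue (PAP A C) lam_s &
      forall v : 'cV[R]_n, PAP A C *m v = lam_s *: v -> (b0 A C b)^T *m v = 0].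
Proof.
move=> _ symA rankC n0_lt _ S1_orth S1_ker z_min b0z H g0.
have eig_H := hard_case_eigenvalue symA rankC S1_orth S1_ker z_min b0z.
have [lam_min g0_ortho] := qep_lower_bound_spectrum (H_sym S1 symA)
  (gam_inv_gt0 n0_lt) eig_H (QEP_minimizer_le rankC S1_orth S1_ker z_min).
split=> //; first exact: (eigenvalue_PAP symA rankC S1_orth S1_ker eig_H).
exact: (b0_ortho_PAP_eigenspace rankC S1_orth S1_ker g0_ortho).
Qed.
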